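(* Let $\mathcal{B}$ be a $\sigma$-algebra on a nonempty set $E$ and let $\nu$ be an essential $\sigma$-maxitive measure on $\mathcal{B}$. Then $\nu$ is autocontinuous. Moreover, if the empty set is the only $\nu$-negligible subset of $E$, then $\nu$ has a cardinal density, i.e. there is a map $c:E\to[0,\infty]$ with $\nu(B)=\sup_{x\in B}c(x)$ for all $B\in\mathcal{B}$.
   Context: A maxitive measure on $\mathcal{B}$ is a map $\nu:\mathcal{B}\to[0,\infty]$ with $\nu(\emptyset)=0$ and $\nu(B\cup B')=\max(\nu(B),\nu(B'))$; it is $\sigma$-maxitive if moreover it is continuous from below: $\nu(\bigcup_n B_n)=\lim_n\nu(B_n)$ for every nondecreasing sequence $B_1\subset B_2\subset\cdots$ in $\mathcal{B}$. $\nu$ is essential if there exists a $\sigma$-finite $\sigma$-additive measure $m$ on $\mathcal{B}$ such that $\nu(B)>0\iff m(B)>0$ for all $B\in\mathcal{B}$. A subset $N\subset E$ is $\nu$-negligible if $N\subset G$ for some $G\in\mathcal{B}$ with $\nu(G)=0$. A map $f:E\to[0,\infty]$ is $\mathcal{B}$-measurable if $\{f>t\}\in\mathcal{B}$ for all $t\geq0$. The $\nu$-essential supremum is $\bigoplus^{\nu}_{x\in B}f(x)=\inf\{t>0:B\cap\{f>t\}\text{ is }\nu\text{-negligible}\}$. $\nu$ is autocontinuous if there is a $\mathcal{B}$-measurable $f:E\to[0,\infty]$ with $\nu(B)=\bigoplus^{\nu}_{x\in B}f(x)$ for all $B\in\mathcal{B}$. *)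

From HB Require Import structures.
From mathcomp Require Import all_boot all_order all_algebra.
From mathcomp Require Import all_classical all_reals all_analysis.
Set Implicit Arguments. Unset Strict Implicit. Unset Printing Implicit Defensive.
Import Order.TTheory GRing.Theory Num.Theory.
Local Open Scope classical_set_scope.
Local Open Scope ring_scope.
Local Open Scope ereal_scope.

Section Maxitive.
Context (d : measure_display) (T : measurableType d) (R : realType).
Implicit Types (nu : set T -> \bar R).

Definition maxitive nu :=
  nu set0 = 0 /\ (forall B, measurable B -> 0 <= nu B) /\
  forall B B', measurable B -> measurable B' -> nu (B `|` B') = maxe (nu B) (nu B').

Definition sigma_maxitive nu :=
  maxitive nu /\
  forall B : (set T)^nat, (forall n, measurable (B n)) ->
    {homo B : n m / (n <= m)%N >-> n `<=` m} ->
    (fun n => nu (B n)) @ \oo --> nu (\bigcup_n B n).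

Definition essential nu :=
  exists m : {measure set T -> \bar R}, sigma_finite setT m /\
    forall B, measurable B -> (0 < nu B <-> 0 < m B).

Definition max_negligible nu (N : set T) :=
  exists G, [/\ measurable G, N `<=` G & nu G = 0].

Definition Bmeasurable (f : T -> \bar R) :=
  forall t : R, (0 <= t)%R -> measurable [set x | t%:E < f x].

Definition esssup nu (B : set T) (f : T -> \bar R) :=
  ereal_inf [set t%:E | t in [set t : R | (0 < t)%R /\
             max_negligible nu (B `&` [set x | t%:E < f x])]].

Definition autocontinuous nu :=
  exists f : T -> \bar R, (forall x, 0 <= f x) /\ Bmeasurable f /\
    forall B, measurable B -> nu B = esssup nu B f.

(* supremum in [0,+oo] (sup of the empty family is 0) *)
Definition sup0 (B : set T) (c : T -> \bar R) := ereal_sup ([set 0] `|` c @` B).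

Definition has_cardinal_density nu :=
  exists c : T -> \bar R, (forall x, 0 <= c x) /\
    forall B, measurable B -> nu B = sup0 B c.
End Maxitive.

From Pilot Require Import Defs.
From mathcomp Require Import all_boot all_order all_algebra.
From mathcomp Require Import all_classical all_reals all_analysis.
From mathcomp Require Import measurable_realfun.
Set Implicit Arguments.
Unset Strict Implicit.
Unset Printing Implicit Defensive.
Import Order.TTheory GRing.Theory Num.Theory.

(* For a level t >= 0, the measurable sets of nu-value at most t are stable
   under countable unions by sigma-maxitivity.  On each piece of finite
   m-measure of a sigma-finite measure m equivalent to nu one of them has
   maximal m-measure; the union G_t of these absorbs every set of nu-value at
   most t up to an m-null, hence nu-null, set.  Running t over the
   nonnegative rationals, f x := inf {t | x \in G_t} is a measurable density:
   B \ G_t is negligible for rational t slightly above nu B, which bounds the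
   essential supremum of f on B by nu B; conversely B lies in the union of a
   negligible set and of the G_t with t close to that essential supremum.
   When only the empty set is negligible, the essential supremum is the plain
   supremum. *)

Local Open Scope classical_set_scope.
Local Open Scope ring_scope.
Local Open Scope ereal_scope.

Section sigma_maxitive_measure.
Context (d : measure_display) (T : measurableType d) (R : realType).
Variable nu : set T -> \bar R.
Hypothesis nu_smax : sigma_maxitive nu.

Lemma maxitive0 : nu set0 = 0. Proof. by case: nu_smax => -[]. Qed.

Lemma maxitive_ge0 A : measurable A -> 0 <= nu A.
Proof. by case: nu_smax => -[_ [+ _]] _; apply. Qed.

Lemma maxitiveU A B : measurable A -> measurable B ->
  nu (A `|` B) = maxe (nu A) (nu B).
Proof. by case: nu_smax => -[_ [_ +]] _; apply. Qed.

Lemma le_maxitive A B : measurable A -> measurable B -> A `<=` B ->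
  nu A <= nu B.
Proof. by move=> mA mB /setUidr <-; rewrite maxitiveU // le_max lexx. Qed.

Lemma maxitiveU_le A B t : measurable A -> measurable B ->
  nu A <= t -> nu B <= t -> nu (A `|` B) <= t.
Proof. by move=> mA mB At Bt; rewrite maxitiveU // ge_max At Bt. Qed.

Lemma maxitive_bigcup_le (A : (set T)^nat) t : (forall n, measurable (A n)) ->
  (forall n, nu (A n) <= t) -> nu (\bigcup_n A n) <= t.
Proof.
move=> mA At; pose U k := \big[setU/set0]_(i < k.+1) A i.
have mU k : measurable (U k) by apply: bigsetU_measurable => i _.
have Ut k : nu (U k) <= t.
  elim: k => [|k IHk]; first by rewrite /U big_ord1 At.
  by rewrite /U big_ord_recr /=; apply: maxitiveU_le IHk (At _); [exact: mU|].
have U_homo : {homo U : n m / (n <= m)%N >-> n `<=` m}.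
  by move=> n m nm; apply: subset_bigsetU.
have := nu_smax.2 U mU U_homo; rewrite bigcup_bigsetU_bigcup => nuU.
by rewrite -(cvg_lim _ nuU) //; apply: lime_le; [exact: cvgP nuU|exact: nearW].
Qed.

Lemma maxitive_bigcup_le_cond (A : (set T)^nat) (P : set nat) t :
  (forall n, P n -> measurable (A n) /\ nu (A n) <= t) -> 0 <= t ->
  nu (\bigcup_(n in P) A n) <= t.
Proof.
move=> PA t0; rewrite bigcup_mkcond; apply: maxitive_bigcup_le => n;
  case: ifPn => [/set_mem /PA[] //|_]; by [exact: measurable0|rewrite maxitive0].
Qed.

End sigma_maxitive_measure.

Section measure_argmax.
Context (d : measure_display) (T : measurableType d) (R : realType).
Variable m : {measure set T -> \bar R}.

Lemma measure_argmax_bigcup_closed (F : set T) (fam : set (set T)) :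
  measurable F -> m F < +oo ->
  (forall C, fam C -> measurable C /\ C `<=` F) -> fam set0 ->
  (forall A : (set T)^nat, (forall n, fam (A n)) -> fam (\bigcup_n A n)) ->
  exists2 D, fam D & forall C, fam C -> m C <= m D.
Proof.
move=> mF mFoo famF fam0 fam_bigcup.
have le_mF C : fam C -> m C <= m F.
  by case/famF => mC CF; apply: le_measure; rewrite ?inE.
have mF_fin : m F \is a fin_num by rewrite ge0_fin_numE ?measure_ge0.
have m_fin C : fam C -> m C \is a fin_num.
  move=> fC; rewrite ge0_fin_numE ?measure_ge0 //.
  exact: le_lt_trans (le_mF _ fC) mFoo.
pose S := [set fine (m C) | C in fam].
have supS : has_sup S.
  split; first by exists (fine (m set0)), set0.
  exists (fine (m F)) => _ [C fC <-].
  exact: fine_le (m_fin _ fC) mF_fin (le_mF _ fC).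
have near_sup k : exists C, fam C /\ (sup S - k.+1%:R^-1 < fine (m C))%R.
  have k_gt0 : (0 < k.+1%:R^-1 :> R)%R by rewrite invr_gt0.
  by have [_ [C fC <-] ?] := sup_adherent k_gt0 supS; exists C.
have [Cs Cs_fam] := choice near_sup.
have famD : fam (\bigcup_k Cs k) by apply: fam_bigcup => k; case: (Cs_fam k).
exists (\bigcup_k Cs k) => // C fC.
rewrite -(fineK (m_fin C fC)) -(fineK (m_fin _ famD)) lee_fin.
apply: (@le_trans _ _ (sup S)); first by apply: sup_upper_bound => //; exists C.
apply/ler_addgt0Pr => e e0; have [k ke] := ltr_add_invr (y := 0%R) e0.
have [fCk Ck_sup] := Cs_fam k.
have CkD : (fine (m (Cs k)) <= fine (m (\bigcup_k Cs k)))%R.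
  apply: fine_le (m_fin _ fCk) (m_fin _ famD) _.
  apply: le_measure; last exact: bigcup_sup.
    by rewrite inE; exact: (famF _ fCk).1.
  by rewrite inE; exact: (famF _ famD).1.
rewrite add0r in ke; rewrite -lerBlDr (le_trans _ CkD) // ltW //.
by apply: le_lt_trans Ck_sup; rewrite lerD2l lerN2 ltW.
Qed.

End measure_argmax.

Section essential_sublevel_sets.
Context (d : measure_display) (T : measurableType d) (R : realType).
Variables (nu : set T -> \bar R) (m : {measure set T -> \bar R}).
Hypothesis nu_smax : sigma_maxitive nu.
Hypothesis m_sfin : sigma_finite setT m.
Hypothesis nu_m : forall B, measurable B -> (0 < nu B <-> 0 < m B).

Lemma essential_null A : measurable A -> m A = 0 -> nu A = 0.
Proof.
move=> mA mA0; apply/eqP; rewrite eq_le maxitive_ge0 // andbT leNgt.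
by apply/negP => /(nu_m mA).1; rewrite mA0 ltxx.
Qed.

Lemma maximal_sublevel_setD_null (F D C : set T) t :
  measurable F -> measurable D -> D `<=` F -> m D < +oo ->
  (forall C', measurable C' -> C' `<=` F -> nu C' <= t -> m C' <= m D) ->
  measurable C -> nu C <= t -> nu D <= t -> m ((C `&` F) `\` D) = 0.
Proof.
move=> mF mD DF mDoo Dmax mC Ct Dt.
have mCF : measurable (C `&` F) by exact: measurableI.
have mCFD : measurable ((C `&` F) `\` D) by exact: measurableD.
have : m (D `|` (C `&` F)) <= m D.
  apply: Dmax; [exact: measurableU|by move=> x [/DF|[]]|].
  by apply: maxitiveU_le => //; apply: le_trans Ct; apply: le_maxitive.
rewrite -[D `|` _]setD0 -(setDv D) -setUDr measureU ?setDIK //.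
have mD_fin : m D \is a fin_num by rewrite ge0_fin_numE ?measure_ge0.
rewrite -[leRHS]adde0 leeD2lE // => mCFD0.
by apply/eqP; rewrite eq_le mCFD0 measure_ge0.
Qed.

Lemma essential_greatest_sublevel_set t : 0 <= t ->
  exists G, [/\ measurable G, nu G <= t &
    forall C, measurable C -> nu C <= t -> nu (C `\` G) = 0].
Proof.
move=> t0; have [F Fcov mF] := m_sfin.
pose sublevel k C := [/\ measurable C, C `<=` F k & nu C <= t].
have max_sublevel k : exists D, sublevel k D /\
    forall C, sublevel k C -> m C <= m D.
  have [mFk mFkoo] := mF k.
  have [|||D ? ?] :=
    @measure_argmax_bigcup_closed _ _ _ m _ (sublevel k) mFk mFkoo.
  - by move=> C [].
  - by split; rewrite ?maxitive0.
  - move=> A sA; split.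
    + by apply: bigcup_measurable => n _; case: (sA n).
    + by move=> x [n _]; case: (sA n) => _ + _; apply.
    + by apply: maxitive_bigcup_le => // n; case: (sA n).
  by exists D.
have [D DP] := choice max_sublevel.
have mD k : measurable (D k) by case: (DP k) => -[].
have mG : measurable (\bigcup_k D k) by exact: bigcup_measurable.
exists (\bigcup_k D k); split => //.
  by apply: (maxitive_bigcup_le nu_smax) => k; case: (DP k) => -[].
move=> C mC Ct; apply: essential_null; first exact: measurableD.
have piece_null k : m ((C `&` F k) `\` D k) = 0.
  have [[_ DF Dt] Dmax] := DP k; have [mFk mFkoo] := mF k.
  apply: (maximal_sublevel_setD_null (t := t)) => // [|C' mC' C'F C't].
    by apply: le_lt_trans mFkoo; apply: le_measure; rewrite ?inE.
  exact: Dmax.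
apply/eqP; rewrite eq_le measure_ge0 andbT.
rewrite -(@eseries0 _ (fun k => m ((C `&` F k) `\` D k)) 0 xpredT) => [|k _ _].
  apply: measure_sigma_subadditive => [k||].
  - exact/measurableD/mD/measurableI/(mF k).1.
  - exact: measurableD.
  move=> x [Cx Gx]; have : [set: T] x by [].
  rewrite Fcov => -[k _ Fkx]; exists k => //; split => // Dkx.
  by apply: Gx; exists k.
exact: piece_null.
Qed.

End essential_sublevel_sets.

Section level_density.
Context (d : measure_display) (T : measurableType d) (R : realType).
Variables (nu : set T -> \bar R) (c : nat -> \bar R) (G : nat -> set T).
Hypothesis nu_smax : sigma_maxitive nu.
Hypothesis c_ge0 : forall n, 0 <= c n.
Hypothesis mG : forall n, measurable (G n).
Hypothesis nuG : forall n, nu (G n) <= c n.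
Hypothesis G_max :
  forall n C, measurable C -> nu C <= c n -> nu (C `\` G n) = 0.
Hypothesis c_dense : forall r e : R, (0 <= r)%R -> (0 < e)%R ->
  exists n, r%:E <= c n /\ c n < (r + e)%:E.

Let level n x : \bar R := if x \in G n then c n else +oo.

Definition level_density x := ereal_inf (range (level ^~ x)).

Lemma level_density_le n x : G n x -> level_density x <= c n.
Proof. by move=> Gx; apply: ereal_inf_lbound; exists n; rewrite /level ?mem_set. Qed.

Lemma level_density_lt x s : level_density x < s -> exists n, G n x /\ c n < s.
Proof.
case/ereal_inf_lt => _ [n _ <-]; rewrite /level.
by case: ifPn => [/set_mem Gx|_]; [exists n|rewrite ltNge leey].
Qed.

Lemma level_density_ge0 x : 0 <= level_density x.
Proof.
apply: le_ereal_inf_tmp => _ [n _ <-]; rewrite /level.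
by case: ifPn => // _; exact: c_ge0.
Qed.

Lemma level_density_Bmeasurable : Bmeasurable level_density.
Proof.
have mlevel n : measurable_fun setT (level n).
  apply: measurable_fun_ifT => //; apply: (measurable_fun_bool true).
  rewrite setTI (_ : _ @^-1` _ = G n) //.
  by apply/seteqP; split => x /=; [move/set_mem|move/mem_set].
have mf : measurable_fun setT level_density.
  rewrite (_ : level_density = fun x => einfs (level ^~ x) 0%N).
    exact: measurable_fun_einfs.
  apply/funext => x; rewrite /level_density /einfs /sdrop /=; congr ereal_inf.
  by apply/seteqP; split => _ [n _ <-]; exists n.
move=> t _; rewrite -[X in measurable X]setTI.
rewrite (_ : [set x | _] = level_density @^-1` `]t%:E, +oo]).
  exact/mf/emeasurable_itv.
by apply/seteqP; split => x /=; rewrite in_itv /= leey andbT.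
Qed.

Lemma esssup_level_density_le B : measurable B ->
  esssup nu B level_density <= nu B.
Proof.
move=> mB; have := maxitive_ge0 nu_smax mB.
case nuB : (nu B) => [r| |] // r0; last by rewrite leey.
rewrite lee_fin in r0; apply/lee_addgt0Pr => e e0; rewrite -EFinD.
have [n [rc cre]] := c_dense r0 e0.
apply: ereal_inf_lbound; exists (r + e)%R => //; split; first exact: ltr_wpDl.
exists (B `\` G n); split; first exact: measurableD.
  move=> x [Bx fx]; split => // Gx.
  have := le_trans (level_density_le Gx) (ltW cre).
  by move=> /(lt_le_trans fx); rewrite ltxx.
by apply: G_max => //; rewrite nuB.
Qed.

Lemma le_esssup_level_density B : measurable B ->
  nu B <= esssup nu B level_density.
Proof.
move=> mB; apply: le_ereal_inf_tmp => _ [t [t0 [N [mN BN N0]]] <-].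
apply/lee_addgt0Pr => e e0; rewrite -EFinD.
have te_gt0 : (0 < t + e)%R by exact: addr_gt0.
pose U := \bigcup_(n in [set n | c n < (t + e)%:E]) G n.
have mU : measurable U by exact: bigcup_measurable.
have nuU : nu U <= (t + e)%:E.
  apply: (maxitive_bigcup_le_cond nu_smax) => [n /= cn|]; last exact: ltW.
  by split => //; exact: le_trans (nuG n) (ltW cn).
have BNU : B `<=` N `|` U.
  move=> x Bx; have [ft|] := pselect (t%:E < level_density x).
    by left; apply: BN.
  move/negP; rewrite -leNgt => ft; right.
  have tte : t%:E < (t + e)%:E by rewrite lte_fin ltrDl.
  by have [n [Gx cn]] := level_density_lt (le_lt_trans ft tte); exists n.
apply: le_trans (le_maxitive nu_smax mB (measurableU _ _ mN mU) BNU) _.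
by apply: (maxitiveU_le nu_smax) => //; rewrite N0 lee_fin ltW.
Qed.

Lemma level_density_autocontinuous : autocontinuous nu.
Proof.
exists level_density; split; first exact: level_density_ge0.
split; first exact: level_density_Bmeasurable.
move=> B mB; apply/eqP; rewrite eq_le.
by rewrite le_esssup_level_density ?esssup_level_density_le.
Qed.

End level_density.

Section autocontinuity.
Context (d : measure_display) (T : measurableType d) (R : realType).

Lemma sigma_maxitive_essential_autocontinuous (nu : set T -> \bar R) :
  sigma_maxitive nu -> essential nu -> autocontinuous nu.
Proof.
move=> nu_smax [m [m_sfin nu_m]].
(* [c] enumerates the nonnegative rationals. *)
pose c n : \bar R := (Num.max (ratr (odflt 0 (unpickle n))) 0)%:E.
have c_ge0 n : 0 <= c n by rewrite lee_fin le_max lexx orbT.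
have c_dense r e : (0 <= r)%R -> (0 < e)%R ->
    exists n, r%:E <= c n /\ c n < (r + e)%:E.
  move=> r0 e0; have [q] : exists q, (ratr q \in `]r, r + e[)%R.
    by apply: rat_in_itvoo; rewrite ltrDl.
  rewrite in_itv /= => /andP[rq qre]; exists (pickle q).
  rewrite /c pickleK /= (max_idPl (ltW (le_lt_trans r0 rq))) !lte_fin lee_fin.
  by rewrite ltW.
have [G GP] := choice (fun n =>
  essential_greatest_sublevel_set nu_smax m_sfin nu_m (c_ge0 n)).
by apply: (@level_density_autocontinuous _ _ _ _ c G) => // n; case: (GP n).
Qed.

Lemma esssup_sup0 (nu : set T -> \bar R) (B : set T) (f : T -> \bar R) :
  nu set0 = 0 -> (forall N, max_negligible nu N -> N = set0) ->
  esssup nu B f = Defs.sup0 B f.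
Proof.
move=> nu0 negl0; apply/eqP; rewrite eq_le; apply/andP; split.
  have : 0 <= Defs.sup0 B f by apply: ereal_sup_ubound; left.
  case sup0B : (Defs.sup0 B f) => [r| |] // r0; last by rewrite leey.
  rewrite lee_fin in r0; apply/lee_addgt0Pr => e e0; rewrite -EFinD.
  apply: ereal_inf_lbound; exists (r + e)%R => //; split; first exact: ltr_wpDl.
  exists set0; split => // x [Bx fx].
  have : f x <= Defs.sup0 B f by apply: ereal_sup_ubound; right; exists x.
  by rewrite sup0B => /(lt_le_trans fx); rewrite lte_fin gtrDl ltNge (ltW e0).
apply: ge_ereal_sup => _ [->|[x Bx <-]].
  by apply: le_ereal_inf_tmp => _ [t [t0 _] <-]; rewrite lee_fin ltW.
apply: le_ereal_inf_tmp => _ [t [t0 /negl0 Bft] <-]; rewrite leNgt.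
by apply/negP => ft; have : (B `&` [set x | t%:E < f x]) x by []; rewrite Bft.
Qed.

End autocontinuity.

Theorem corollary3p4 (d : measure_display) (E : measurableType d) (R : realType)
  (nu : set E -> \bar R) :
  [set: E] !=set0 ->
  sigma_maxitive nu -> essential nu ->
  autocontinuous nu /\
  ((forall N : set E, max_negligible nu N -> N = set0) -> has_cardinal_density nu).
Proof.
move=> _ nu_smax nu_ess.
have [f [f_ge0 [mf nu_f]]] :=
  sigma_maxitive_essential_autocontinuous nu_smax nu_ess.
split; first by exists f.
move=> negl0; exists f; split => // B mB.
by rewrite nu_f // esssup_sup0 // (maxitive0 nu_smax).
Qed.
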